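(* For every $k\in\mathbb N$, $\psi_k(\mathrm{Rist}_{G_3}(\widehat k))=H_k\times\cdots\times H_k$ ($3^k$ factors). In particular, $\psi_k(\mathrm{Rist}_{G_3}(1\cdots1))=H_k\times\{e\}\times\cdots\times\{e\}$ for the vertex $1\cdots1$ of length $k$.
   Context: Let $X=\{1,2,3\}$ and $T$ the ternary rooted tree with vertex set $X^*$. $\mathrm{Aut}(T)$ is the group of root-preserving automorphisms with product left-to-right: $(gh)(u)=h(g(u))$. Sections $g|_u$ are defined by $g(uv)=g(u)\,g|_u(v)$; we write $g=(g|_1,g|_2,g|_3)\lambda_g$; $e$ is the identity. $G_3=\langle A\rangle\le\mathrm{Aut}(T)$, $A=\{a,b,c\}$, with $a=(a,b,e)(1\,2)$, $b=(e,b,c)(2\,3)$, $c=(a,e,c)(3\,1)$. For a word $w$ over $A\cup A^{-1}$, $|w|_A$ is its total exponent sum (well defined on elements of $G_3$ since relators have zero exponent sums). $H_k=\{g\in G_3:|g|_A\equiv0\pmod{2^{k+1}}\}$. $\mathrm{St}_{G_3}(\widehat k)$ is the subgroup fixing every vertex of level $k$, and $\psi_k:\mathrm{St}_{G_3}(\widehat k)\to G_3^{3^k}$, $g\mapsto (g|_u)_{u\in X^k}$ (lexicographic order of $X^k$) is the injective homomorphism. For a vertex $u$, $\mathrm{Rist}_{G_3}(u)$ is the subgroup of elements acting trivially on all vertices outside the subtree rooted at $u$; $\mathrm{Rist}_{G_3}(\widehat k)$ is the subgroup generated by $\bigcup_{|u|=k}\mathrm{Rist}_{G_3}(u)$. 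*)

From Stdlib Require Import List ZArith.
Import ListNotations.

Inductive X : Type := X1 | X2 | X3.

Inductive Gen : Type := Ga | Gb | Gc.

(* One step of the action of a generator (i = false) or of its inverse
   (i = true) on the first letter x of a vertex: returns the image letter and
   the section at x (None = identity e, Some (s, i') = s^{+-1}).
   a = (a,b,e)(1 2), b = (e,b,c)(2 3), c = (a,e,c)(3 1),
   g(xv) = lambda_g(x) g|_x(v);  g^{-1}(lambda_g(x) w) = x (g|_x)^{-1}(w). *)
Definition step (s : Gen) (i : bool) (x : X) : X * option (Gen * bool) :=
  match s, i, x with
  | Ga, false, X1 => (X2, Some (Ga, false))
  | Ga, false, X2 => (X1, Some (Gb, false))
  | Ga, false, X3 => (X3, None)
  | Gb, false, X1 => (X1, None)
  | Gb, false, X2 => (X3, Some (Gb, false))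
  | Gb, false, X3 => (X2, Some (Gc, false))
  | Gc, false, X1 => (X3, Some (Ga, false))
  | Gc, false, X2 => (X2, None)
  | Gc, false, X3 => (X1, Some (Gc, false))
  | Ga, true, X2 => (X1, Some (Ga, true))
  | Ga, true, X1 => (X2, Some (Gb, true))
  | Ga, true, X3 => (X3, None)
  | Gb, true, X1 => (X1, None)
  | Gb, true, X3 => (X2, Some (Gb, true))
  | Gb, true, X2 => (X3, Some (Gc, true))
  | Gc, true, X3 => (X1, Some (Ga, true))
  | Gc, true, X2 => (X2, None)
  | Gc, true, X1 => (X3, Some (Gc, true))
  end.

Fixpoint gact (s : Gen) (i : bool) (u : list X) : list X :=
  match u with
  | [] => []
  | x :: v =>
      match step s i x with
      | (y, None) => y :: v
      | (y, Some (s', i')) => y :: gact s' i' v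
      end
  end.

(* Words over A ∪ A^{-1}: a letter (s, false) is s, (s, true) is s^{-1}. *)
Definition word := list (Gen * bool).

(* Action of a word; product is left-to-right: (gh)(u) = h(g(u)). *)
Definition act (w : word) (u : list X) : list X :=
  fold_left (fun v l => gact (fst l) (snd l) v) w u.

Definition equiv (w w' : word) : Prop := forall u, act w u = act w' u.

Definition winv (w : word) : word := rev (map (fun l => (fst l, negb (snd l))) w).

Definition expsum (w : word) : Z :=
  fold_right (fun (l : Gen * bool) (z : Z) => ((if snd l then (-1)%Z else 1%Z) + z)%Z) 0%Z w.

(* H_k = { g in G_3 : |g|_A = 0 mod 2^(k+1) } (|.|_A is well defined on G_3). *)
Definition InH (k : nat) (g : word) : Prop :=
  exists w, equiv w g /\ Z.divide (2 ^ Z.of_nat (S k))%Z (expsum w).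

(* Section g|_u as a map on vertices: g(uv) = g(u) g|_u(v). *)
Definition sect (w : word) (u : list X) (v : list X) : list X :=
  skipn (length u) (act w (u ++ v)).

Definition InRist (u : list X) (w : word) : Prop :=
  forall v, (~ exists t, v = u ++ t) -> act w v = v.

(* Rist_{G_3}(\hat k): subgroup generated by the union of Rist(u), |u| = k:
   products of elements of the union and their inverses. *)
Definition InRistLevel (k : nat) (w : word) : Prop :=
  exists l : list (list X * word * bool),
    (forall p, In p l -> length (fst (fst p)) = k /\ InRist (fst (fst p)) (snd (fst p))) /\
    equiv w (concat (map (fun p : list X * word * bool => if snd p then winv (snd (fst p)) else snd (fst p)) l)).

Definition ones (k : nat) : list X := repeat X1 k.

From Stdlib Require Import List ZArith Lia Bool.
Import ListNotations.

(* A word [h] with [4 | |h|_A] can be lifted to a word [Q] acting as [h] below a letter [x] and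
   trivially elsewhere, with [|Q|_A = |h|_A / 2]: write [h] as a product of blocks [a^r s a^-(r+1)]
   (exponents mod 4) and lift each block by an explicit word; the three letters are exchanged by
   the cyclic symmetry [a -> b -> c].  Iterating along a vertex [u] of length [k] turns any [h]
   with [2^(k+1) | |h|_A] into an element of [Rist(u)] with section [h] at [u].
   Conversely, the exponent sums of the sections of [g] at level [k] add up to [2^k |g|_A].  For
   [g] in [Rist(u)] all sections except the one at [u] are trivial, and [|g|_A] is even because
   [g] fixes the first level while each generator acts there as a transposition; so the section
   at [u] has exponent sum divisible by [2^(k+1)]. *)

Lemma act_app (w1 w2 : word) (v : list X) : act (w1 ++ w2) v = act w2 (act w1 v).
Proof. unfold act. now rewrite fold_left_app. Qed.

Lemma act_letter_cons (l : Gen * bool) (w : word) (v : list X) :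
  act (l :: w) v = act w (gact (fst l) (snd l) v).
Proof. reflexivity. Qed.

Lemma act_nil_vertex (w : word) : act w [] = [].
Proof. induction w as [|l w IH]; [reflexivity | exact IH]. Qed.

Lemma gact_inv (s : Gen) (i : bool) (v : list X) : gact s (negb i) (gact s i v) = v.
Proof.
  induction v as [|x v IH] in s, i |- *; [reflexivity|].
  destruct s, i, x; simpl; f_equal; first [exact (IH _ false) | exact (IH _ true)].
Qed.

Lemma gact_inv_r (s : Gen) (i : bool) (v : list X) : gact s i (gact s (negb i) v) = v.
Proof. rewrite <- (negb_involutive i) at 1. apply gact_inv. Qed.

Definition letter_inv (l : Gen * bool) : Gen * bool := (fst l, negb (snd l)).

Lemma winv_cons (l : Gen * bool) (w : word) : winv (l :: w) = winv w ++ [letter_inv l].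
Proof. reflexivity. Qed.

Lemma winv_involutive (w : word) : winv (winv w) = w.
Proof.
  unfold winv. rewrite map_rev, rev_involutive, map_map.
  rewrite <- map_id. apply map_ext. intros [s i]. simpl. now rewrite negb_involutive.
Qed.

Lemma act_winv_l (w : word) (v : list X) : act (winv w) (act w v) = v.
Proof.
  induction w as [|l w IH] in v |- *; [reflexivity|].
  rewrite winv_cons, act_app, (act_letter_cons l w), IH. apply gact_inv.
Qed.

Lemma act_winv_r (w : word) (v : list X) : act w (act (winv w) v) = v.
Proof. rewrite <- (winv_involutive w) at 1. apply act_winv_l. Qed.

Lemma expsum_nil : expsum [] = 0%Z.
Proof. reflexivity. Qed.

Lemma expsum_cons (l : Gen * bool) (w : word) :
  expsum (l :: w) = ((if snd l then -1 else 1) + expsum w)%Z.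
Proof. reflexivity. Qed.

Lemma expsum_app (w1 w2 : word) : expsum (w1 ++ w2) = (expsum w1 + expsum w2)%Z.
Proof.
  induction w1 as [|l w1 IH]; [reflexivity|].
  rewrite <- app_comm_cons, !expsum_cons, IH. lia.
Qed.

Lemma expsum_winv (w : word) : expsum (winv w) = (- expsum w)%Z.
Proof.
  induction w as [|[s []] w IH]; [reflexivity| |];
    rewrite winv_cons, expsum_app, IH, !expsum_cons, expsum_nil; cbn [snd letter_inv negb]; lia.
Qed.

Lemma letter_eq_dec (l m : Gen * bool) : {l = m} + {l <> m}.
Proof. repeat decide equality. Defined.

Definition push (stack : word) (l : Gen * bool) : word :=
  match stack with
  | m :: stack' => if letter_eq_dec m (letter_inv l) then stack' else l :: stack
  | [] => [l]
  end.

Definition free_reduce (w : word) : word := rev (fold_left push w []).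

Lemma act_push (stack : word) (l : Gen * bool) (v : list X) :
  act (rev (push stack l)) v = act (rev stack ++ [l]) v.
Proof.
  destruct stack as [|m stack]; [reflexivity|]. simpl.
  destruct (letter_eq_dec m (letter_inv l)) as [->|]; [|reflexivity].
  rewrite <- app_assoc, !act_app. symmetry. apply gact_inv_r.
Qed.

Lemma act_free_reduce (w : word) (v : list X) : act (free_reduce w) v = act w v.
Proof.
  enough (H : forall stack v, act (rev (fold_left push w stack)) v = act (rev stack ++ w) v)
    by apply H.
  induction w as [|l w IH]; intros stack u; simpl.
  - now rewrite app_nil_r.
  - rewrite IH, act_app, act_push, <- act_app, <- app_assoc. reflexivity.
Qed.

Definition freely_trivial (w : word) : bool :=
  match free_reduce w with [] => true | _ => false end.

Lemma freely_trivial_act (w : word) : freely_trivial w = true -> forall v, act w v = v.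
Proof.
  intros H v. rewrite <- act_free_reduce. unfold freely_trivial in H.
  destruct (free_reduce w); [reflexivity | discriminate].
Qed.

Definition option_word (o : option (Gen * bool)) : word :=
  match o with None => [] | Some l => [l] end.

Fixpoint root_perm (w : word) (x : X) : X :=
  match w with
  | [] => x
  | l :: w' => root_perm w' (fst (step (fst l) (snd l) x))
  end.

Fixpoint letter_sec (w : word) (x : X) : word :=
  match w with
  | [] => []
  | l :: w' => option_word (snd (step (fst l) (snd l) x)) ++ letter_sec w' (fst (step (fst l) (snd l) x))
  end.

Lemma gact_cons (s : Gen) (i : bool) (x : X) (v : list X) :
  gact s i (x :: v) = fst (step s i x) :: act (option_word (snd (step s i x))) v.
Proof. simpl. destruct (step s i x) as [y [[s' i']|]]; reflexivity. Qed.

Lemma act_cons (w : word) (x : X) (v : list X) :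
  act w (x :: v) = root_perm w x :: act (letter_sec w x) v.
Proof.
  induction w as [|l w IH] in x, v |- *; [reflexivity|].
  rewrite act_letter_cons, gact_cons, IH, <- act_app. reflexivity.
Qed.

Record lifts (x : X) (Q h : word) : Prop := {
  lifts_on : forall v, act Q (x :: v) = x :: act h v;
  lifts_off : forall y v, y <> x -> act Q (y :: v) = y :: v;
  lifts_expsum : (2 * expsum Q = expsum h)%Z }.

Lemma lifts_nil (x : X) : lifts x [] [].
Proof. split; reflexivity. Qed.

Lemma lifts_app (x : X) (Q1 h1 Q2 h2 : word) :
  lifts x Q1 h1 -> lifts x Q2 h2 -> lifts x (Q1 ++ Q2) (h1 ++ h2).
Proof.
  intros [on1 off1 e1] [on2 off2 e2]. split.
  - intros v. now rewrite !act_app, on1, on2.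
  - intros y v Hy. now rewrite act_app, off1, off2.
  - rewrite !expsum_app. lia.
Qed.

Lemma lifts_winv (x : X) (Q h : word) : lifts x Q h -> lifts x (winv Q) (winv h).
Proof.
  intros [on off e]. split.
  - intros v. rewrite <- (act_winv_r h v) at 1. now rewrite <- on, act_winv_l.
  - intros y v Hy. rewrite <- (off y v Hy) at 1. apply act_winv_l.
  - rewrite !expsum_winv. lia.
Qed.

Lemma lifts_equiv (x : X) (Q h h' : word) :
  lifts x Q h -> equiv h h' -> expsum h = expsum h' -> lifts x Q h'.
Proof.
  intros [on off e] Hh He. split; [|exact off|lia].
  intros v. now rewrite on, Hh.
Qed.

Lemma lifts_telescope (x : X) (l : Gen * bool) (a b c h Q1 Q2 : word) :
  lifts x Q1 (a ++ [l] ++ winv b) -> lifts x Q2 (b ++ h ++ winv c) ->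
  lifts x (Q1 ++ Q2) (a ++ (l :: h) ++ winv c).
Proof.
  intros H1 H2. eapply lifts_equiv; [exact (lifts_app _ _ _ _ _ H1 H2)| |].
  - intros v. rewrite <- !app_assoc, !act_app, act_winv_r. reflexivity.
  - rewrite !expsum_app, !expsum_winv, !expsum_cons, expsum_nil. lia.
Qed.

Definition lift_check (Q h : word) : bool :=
  match root_perm Q X1, root_perm Q X2, root_perm Q X3 with
  | X1, X2, X3 =>
      freely_trivial (letter_sec Q X1 ++ winv h) && freely_trivial (letter_sec Q X2)
      && freely_trivial (letter_sec Q X3) && Z.eqb (2 * expsum Q) (expsum h)
  | _, _, _ => false
  end.

Lemma lift_check_lifts (Q h : word) : lift_check Q h = true -> lifts X1 Q h.
Proof.
  unfold lift_check.
  destruct (root_perm Q X1) eqn:E1, (root_perm Q X2) eqn:E2, (root_perm Q X3) eqn:E3;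
    try discriminate.
  intros H. apply andb_prop in H as [H Hexp]. apply andb_prop in H as [H T3].
  apply andb_prop in H as [T1 T2].
  split; [| |now apply Z.eqb_eq].
  - intros v. rewrite act_cons, E1. f_equal.
    pose proof (freely_trivial_act _ T1 v) as T. rewrite act_app in T.
    rewrite <- (act_winv_r h (act (letter_sec Q X1) v)). now rewrite T.
  - intros [] v Hy; [congruence| |];
      rewrite act_cons, ?E2, ?E3, freely_trivial_act; auto.
Qed.

Inductive res : Type := Rm1 | R0 | R1 | R2.

Definition res_val (r : res) : Z :=
  match r with Rm1 => -1 | R0 => 0 | R1 => 1 | R2 => 2 end.

Definition res_succ (r : res) : res :=
  match r with Rm1 => R0 | R0 => R1 | R1 => R2 | R2 => Rm1 end.

Definition res_pred (r : res) : res :=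
  match r with Rm1 => R2 | R0 => Rm1 | R1 => R0 | R2 => R1 end.

Definition apow (r : res) : word :=
  match r with
  | Rm1 => [(Ga, true)]
  | R0 => []
  | R1 => [(Ga, false)]
  | R2 => [(Ga, false); (Ga, false)]
  end.

(* [apow r] is [a^r] for the residue [r] mod 4 represented in [-1..2], so the block
   [a^r s a^-(r+1)] has exponent sum 0 or 4; products of blocks telescope to [h] when [4 | |h|]. *)
Definition block (r : res) (s : Gen) : word := apow r ++ [(s, false)] ++ winv (apow (res_succ r)).

(* Found by computer search; [lift_check] verifies them.  The blocks [a^r a a^-(r+1)] with
   [r <> R2] are freely trivial, hence lifted by the empty word. *)
Definition block_lift (r : res) (s : Gen) : word :=
  match r, s with
  | Rm1, Gb => [(Ga,true); (Gb,false); (Gc,true); (Gb,true); (Gc,true); (Gb,false); (Gc,false); (Ga,false)]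
  | R0, Gb => [(Gb,true); (Gc,true); (Gb,false); (Gc,false); (Gb,false); (Gc,true)]
  | R1, Gb => [(Ga,false); (Gb,false); (Gc,true); (Gb,true); (Gc,true); (Gb,false); (Gc,false); (Ga,true)]
  | R2, Gb => [(Ga,false); (Gc,true); (Gb,true); (Gc,false); (Gb,false); (Ga,false); (Ga,false);
               (Gc,false); (Ga,true); (Ga,true); (Gb,true); (Ga,false)]
  | Rm1, Gc => [(Gc,true); (Ga,false); (Gb,false); (Ga,true); (Gb,true); (Ga,true); (Gb,false); (Gc,false)]
  | R0, Gc => [(Ga,true); (Gb,false); (Ga,false); (Gb,false); (Ga,true); (Gb,true)]
  | R1, Gc => [(Gc,false); (Ga,false); (Gb,false); (Ga,true); (Gb,true); (Ga,true); (Gb,false); (Gc,true)]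
  | R2, Gc => [(Gc,false); (Gb,true); (Ga,false); (Gc,false); (Ga,true); (Gc,false); (Gb,false);
               (Gc,false); (Gb,true); (Gc,true); (Gc,true); (Ga,false)]
  | R2, Ga => [(Ga,false); (Gb,true); (Gc,false); (Ga,false); (Gb,true); (Gc,false); (Gb,false);
               (Gc,false); (Gb,true); (Gc,true); (Ga,true); (Gc,true); (Gb,false); (Ga,true);
               (Ga,false); (Gc,true); (Gb,true); (Gc,false); (Gb,false); (Ga,false); (Ga,false);
               (Gc,false); (Ga,true); (Ga,true); (Gb,true); (Ga,false)]
  | _, _ => []
  end.

Lemma block_lifts (r : res) (s : Gen) : lifts X1 (block_lift r s) (block r s).
Proof. apply lift_check_lifts. destruct r, s; vm_compute; reflexivity. Qed.

Lemma block_inv_lifts (r : res) (s : Gen) :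
  lifts X1 (winv (block_lift (res_pred r) s)) (apow r ++ [(s, true)] ++ winv (apow (res_pred r))).
Proof. destruct r; exact (lifts_winv _ _ _ (block_lifts _ s)). Qed.

Fixpoint lift_word (h : word) (r : res) : word :=
  match h with
  | [] => []
  | (s, false) :: h' => block_lift r s ++ lift_word h' (res_succ r)
  | (s, true) :: h' => winv (block_lift (res_pred r) s) ++ lift_word h' (res_pred r)
  end.

Fixpoint res_after (h : word) (r : res) : res :=
  match h with
  | [] => r
  | (_, false) :: h' => res_after h' (res_succ r)
  | (_, true) :: h' => res_after h' (res_pred r)
  end.

Lemma lift_word_lifts (h : word) (r : res) :
  lifts X1 (lift_word h r) (apow r ++ h ++ winv (apow (res_after h r))).
Proof.
  induction h as [|[s []] h IH] in r |- *; simpl.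
  - eapply lifts_equiv; [apply lifts_nil| |].
    + intros v. now rewrite act_app, act_winv_l.
    + rewrite expsum_nil, expsum_app, expsum_winv. lia.
  - exact (lifts_telescope _ _ _ _ _ _ _ _ (block_inv_lifts r s) (IH _)).
  - exact (lifts_telescope _ _ _ _ _ _ _ _ (block_lifts r s) (IH _)).
Qed.

Lemma res_after_val (h : word) (r : res) :
  exists q, (res_val (res_after h r) = res_val r + expsum h + 4 * q)%Z.
Proof.
  induction h as [|[s []] h IH] in r |- *; [exists 0%Z; simpl; lia| |];
    rewrite expsum_cons; cbn [res_after snd].
  - destruct (IH (res_pred r)) as [q Hq].
    destruct r; cbn [res_pred res_val] in *; [exists (q + 1)%Z | exists q ..]; lia.
  - destruct (IH (res_succ r)) as [q Hq].
    destruct r; cbn [res_succ res_val] in *; [exists q | exists q | exists q | exists (q - 1)%Z]; lia.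
Qed.

Lemma lifts_X1 (h : word) : (4 | expsum h)%Z -> exists Q, lifts X1 Q h.
Proof.
  intros [m Hm]. exists (lift_word h R0).
  assert (Hfin : res_after h R0 = R0).
  { destruct (res_after_val h R0) as [q Hq].
    destruct (res_after h R0); cbn [res_val] in Hq; [lia | reflexivity | lia | lia]. }
  pose proof (lift_word_lifts h R0) as H. rewrite Hfin in H. cbn in H.
  now rewrite app_nil_r in H.
Qed.

Definition rot_letter (x : X) : X := match x with X1 => X2 | X2 => X3 | X3 => X1 end.
Definition rot_gen (s : Gen) : Gen := match s with Ga => Gb | Gb => Gc | Gc => Ga end.
Definition rot_word (w : word) : word := map (fun l => (rot_gen (fst l), snd l)) w.

Lemma gact_rot (s : Gen) (i : bool) (v : list X) :
  gact (rot_gen s) i (map rot_letter v) = map rot_letter (gact s i v).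
Proof.
  induction v as [|x v IH] in s, i |- *; [reflexivity|].
  destruct s, i, x; simpl; f_equal; first [exact (IH Ga _) | exact (IH Gb _) | exact (IH Gc _)].
Qed.

Lemma act_rot (w : word) (v : list X) : act (rot_word w) (map rot_letter v) = map rot_letter (act w v).
Proof.
  induction w as [|[s i] w IH] in v |- *; [reflexivity|].
  simpl rot_word. rewrite !act_letter_cons. simpl. now rewrite gact_rot.
Qed.

Lemma rot_letter3 (x : X) : rot_letter (rot_letter (rot_letter x)) = x.
Proof. now destruct x. Qed.

Lemma rot_vertex3 (v : list X) : map rot_letter (map rot_letter (map rot_letter v)) = v.
Proof. rewrite !map_map. rewrite <- map_id. apply map_ext, rot_letter3. Qed.

Lemma rot_word3 (w : word) : rot_word (rot_word (rot_word w)) = w.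
Proof. unfold rot_word. rewrite !map_map. rewrite <- map_id. apply map_ext. now intros [[] i]. Qed.

Lemma expsum_rot (w : word) : expsum (rot_word w) = expsum w.
Proof. induction w as [|l w IH]; [reflexivity|]. simpl rot_word. now rewrite !expsum_cons, IH. Qed.

Lemma lifts_rot (x : X) (Q h : word) : lifts x Q h -> lifts (rot_letter x) (rot_word Q) (rot_word h).
Proof.
  intros [on off e]. split.
  - intros v. rewrite <- (rot_vertex3 v). set (v' := map rot_letter (map rot_letter v)).
    change (rot_letter x :: map rot_letter v') with (map rot_letter (x :: v')).
    rewrite act_rot, on. simpl. now rewrite act_rot.
  - intros y v Hy. rewrite <- (rot_vertex3 v), <- (rot_letter3 y).
    set (v' := map rot_letter (map rot_letter v)). set (y' := rot_letter (rot_letter y)).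
    change (rot_letter y' :: map rot_letter v') with (map rot_letter (y' :: v')).
    rewrite act_rot, off; [reflexivity|].
    intros E. apply Hy. subst y'. now rewrite <- E, rot_letter3.
  - now rewrite !expsum_rot.
Qed.

Lemma lifts_exists (x : X) (h : word) : (4 | expsum h)%Z -> exists Q, lifts x Q h.
Proof.
  intros H. destruct x.
  - now apply lifts_X1.
  - destruct (lifts_X1 (rot_word (rot_word h))) as [Q HQ]; [now rewrite !expsum_rot|].
    exists (rot_word Q). pose proof (lifts_rot _ _ _ HQ) as HQ'. now rewrite rot_word3 in HQ'.
  - destruct (lifts_X1 (rot_word h)) as [Q HQ]; [now rewrite expsum_rot|].
    exists (rot_word (rot_word Q)). pose proof (lifts_rot _ _ _ (lifts_rot _ _ _ HQ)) as HQ'.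
    now rewrite rot_word3 in HQ'.
Qed.

Lemma pow2_succ (n : nat) : (2 ^ Z.of_nat (S n) = 2 * 2 ^ Z.of_nat n)%Z.
Proof. rewrite Nat2Z.inj_succ, Z.pow_succ_r; lia. Qed.

Lemma pow2_pos (n : nat) : (0 < 2 ^ Z.of_nat n)%Z.
Proof. apply Z.pow_pos_nonneg; lia. Qed.

Lemma X_eq_dec (x y : X) : {x = y} + {x <> y}.
Proof. decide equality. Qed.

Lemma rist_lift (u : list X) (h : word) :
  (2 ^ Z.of_nat (S (length u)) | expsum h)%Z ->
  exists g, InRist u g /\ (forall v, act g (u ++ v) = u ++ act h v) /\
            (2 ^ Z.of_nat (length u) * expsum g = expsum h)%Z.
Proof.
  induction u as [|x u IH] in h |- *; intros Hdiv.
  - exists h. split; [|split; [reflexivity | cbn [length Z.of_nat]; rewrite Z.pow_0_r; lia]].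
    intros v Hv. exfalso. apply Hv. now exists v.
  - destruct (IH h) as [g [Hrist [Hact Hexp]]].
    { eapply Z.divide_trans; [|exact Hdiv]. exists 2%Z. simpl length. rewrite (pow2_succ (S _)). lia. }
    destruct (lifts_exists x g) as [Q [on off e]].
    { destruct Hdiv as [m Hm]. exists m. simpl length in Hm. rewrite !pow2_succ in Hm.
      apply (Z.mul_cancel_l _ _ (2 ^ Z.of_nat (length u))); [pose proof (pow2_pos (length u)); lia|].
      rewrite Hexp, Hm. ring. }
    exists Q. split; [|split].
    + intros [|y t] Hout; [apply act_nil_vertex|].
      destruct (X_eq_dec y x) as [->|Hy]; [|now apply off].
      rewrite on, Hrist; [reflexivity|].
      intros [t' ->]. apply Hout. now exists t'.
    + intros v. simpl. now rewrite on, Hact.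
    + simpl length. rewrite pow2_succ, <- Hexp, <- e. ring.
Qed.

Fixpoint vertex_sec (w : word) (u : list X) : word :=
  match u with [] => w | x :: u' => vertex_sec (letter_sec w x) u' end.

Lemma act_length (w : word) (v : list X) : length (act w v) = length v.
Proof.
  induction v as [|x v IH] in w |- *; [now rewrite act_nil_vertex|].
  rewrite act_cons. simpl. now rewrite IH.
Qed.

Lemma act_app_vertex (w : word) (u v : list X) :
  act w (u ++ v) = act w u ++ act (vertex_sec w u) v.
Proof.
  induction u as [|x u IH] in w |- *; simpl.
  - now rewrite act_nil_vertex.
  - now rewrite !act_cons, IH.
Qed.

Lemma expsum_letter_secs (w : word) :
  (expsum (letter_sec w X1) + expsum (letter_sec w X2) + expsum (letter_sec w X3) = 2 * expsum w)%Z.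
Proof.
  induction w as [|[s i] w IH]; [reflexivity|].
  rewrite expsum_cons.
  destruct s, i; cbn [letter_sec step fst snd option_word]; rewrite !expsum_app, ?expsum_cons, ?expsum_nil;
    cbn [snd]; lia.
Qed.

Fixpoint level_vertices (n : nat) : list (list X) :=
  match n with
  | O => [[]]
  | S n => map (cons X1) (level_vertices n) ++ map (cons X2) (level_vertices n)
           ++ map (cons X3) (level_vertices n)
  end.

Lemma in_level_vertices (u : list X) : In u (level_vertices (length u)).
Proof.
  induction u as [|x u IH]; [now left|].
  simpl. rewrite !in_app_iff, !in_map_iff. destruct x; eauto 6.
Qed.

Lemma level_vertices_length (n : nat) (u : list X) : In u (level_vertices n) -> length u = n.
Proof.
  induction n as [|n IH] in u |- *; simpl.
  - now intros [<- | []].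
  - rewrite !in_app_iff, !in_map_iff. intros [[u' [<- H]] | [[u' [<- H]] | [u' [<- H]]]];
      simpl; f_equal; auto.
Qed.

Lemma level_vertices_nodup (n : nat) : NoDup (level_vertices n).
Proof.
  induction n as [|n IH]; simpl.
  - repeat constructor. auto.
  - assert (Hmap : forall x, NoDup (map (cons x) (level_vertices n))).
    { intros x. apply NoDup_map_NoDup_ForallPairs; [intros u v _ _ E; now injection E | exact IH]. }
    repeat apply NoDup_app; auto;
      intros u Hu Hu'; rewrite ?in_app_iff in Hu'; rewrite in_map_iff in Hu;
      destruct Hu as [? [<- _]];
      repeat destruct Hu' as [Hu' | Hu']; rewrite in_map_iff in Hu'; destruct Hu' as [? [E _]]; discriminate.
Qed.

Lemma expsum_level_secs (n : nat) (w : word) :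
  expsum (concat (map (vertex_sec w) (level_vertices n))) = (2 ^ Z.of_nat n * expsum w)%Z.
Proof.
  induction n as [|n IH] in w |- *.
  - cbn [level_vertices map concat vertex_sec]. rewrite app_nil_r, Z.pow_0_r. lia.
  - cbn [level_vertices]. rewrite !map_app, !concat_app, !expsum_app, !map_map.
    cbn [vertex_sec]. rewrite !IH, pow2_succ, (Z.mul_comm 2), <- Z.mul_assoc, <- expsum_letter_secs. ring.
Qed.

Definition perms3 : list (X * X * X) :=
  [(X1, X2, X3); (X2, X1, X3); (X1, X3, X2); (X3, X2, X1); (X2, X3, X1); (X3, X1, X2)].

Definition odd_perm3 (t : X * X * X) : bool :=
  match t with (X1, X2, X3) | (X2, X3, X1) | (X3, X1, X2) => false | _ => true end.

(* Every generator acts on the first level as a transposition. *)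
Lemma root_perm_parity (w : word) :
  In (root_perm w X1, root_perm w X2, root_perm w X3) perms3 /\
  odd_perm3 (root_perm w X1, root_perm w X2, root_perm w X3) = Z.odd (expsum w).
Proof.
  induction w as [|[s i] w [Hin Hodd]]; [split; [now left | reflexivity]|].
  rewrite expsum_cons, Z.odd_add, <- Hodd.
  simpl in Hin. destruct Hin as [H|[H|[H|[H|[H|[H|[]]]]]]]; injection H as H1 H2 H3;
    destruct s, i; cbn [root_perm step fst snd]; rewrite <- H1, <- H2, <- H3;
    split; try reflexivity; simpl; tauto.
Qed.

Lemma root_fixed_even (w : word) : (forall y, root_perm w y = y) -> (2 | expsum w)%Z.
Proof.
  intros Hfix. destruct (root_perm_parity w) as [_ Hodd]. rewrite !Hfix in Hodd.
  destruct (Z.even_spec (expsum w)) as [Heven _].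
  destruct Heven as [m Hm]; [now rewrite <- Z.negb_odd, <- Hodd|]. exists m. lia.
Qed.

Definition vertex_eq_dec := list_eq_dec X_eq_dec.

Lemma app_same_length_inv (u u' v t : list X) : length u = length u' -> u ++ v = u' ++ t -> u = u'.
Proof.
  induction u as [|x u IH] in u' |- *; destruct u' as [|y u']; simpl; try discriminate; [easy|].
  intros Hl E. injection E as -> E. f_equal. eapply IH; eauto.
Qed.

Lemma not_extends_same_length (u u' v : list X) :
  length u' = length u -> u' <> u -> ~ (exists t, u' ++ v = u ++ t).
Proof. intros Hl Hne [t E]. apply Hne. eapply app_same_length_inv; eauto. Qed.

Section Rist.

Variables (u : list X) (f : word).
Hypothesis f_rist : InRist u f.

Lemma rist_winv : InRist u (winv f).
Proof. intros v Hv. rewrite <- (f_rist v Hv) at 1. apply act_winv_l. Qed.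

Lemma rist_off (u' v : list X) : length u' = length u -> u' <> u -> act f (u' ++ v) = u' ++ v.
Proof. intros Hl Hne. now apply f_rist, not_extends_same_length. Qed.

Lemma rist_fixes_level (u' : list X) : length u' = length u -> act f u' = u'.
Proof.
  intros Hl. rewrite <- (app_nil_r u').
  destruct (vertex_eq_dec u' u) as [->|Hne]; [|now apply rist_off].
  rewrite app_nil_r. destruct (vertex_eq_dec (act f u) u) as [|Hne]; [assumption|].
  (* otherwise [f] would fix the image of [u] as well, contradicting injectivity *)
  assert (Himg : act f (act f u) = act f u).
  { rewrite <- (app_nil_r (act f u)) at 1. rewrite rist_off; [apply app_nil_r | apply act_length | exact Hne]. }
  pose proof (act_winv_l f (act f u)) as E. rewrite Himg, act_winv_l in E. now symmetry.
Qed.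

Lemma rist_act_own (v : list X) : act f (u ++ v) = u ++ act (vertex_sec f u) v.
Proof. now rewrite act_app_vertex, rist_fixes_level. Qed.

Lemma rist_sec_off (u' v : list X) :
  length u' = length u -> u' <> u -> act (vertex_sec f u') v = v.
Proof.
  intros Hl Hne. apply (app_inv_head u').
  now rewrite <- (rist_fixes_level u' Hl) at 1; rewrite <- act_app_vertex, rist_off.
Qed.

Lemma rist_expsum_even : u <> [] -> (2 | expsum f)%Z.
Proof.
  intros Hne. apply root_fixed_even. intros y.
  assert (Hlen : length (y :: tl u) = length u) by (destruct u; [easy | reflexivity]).
  pose proof (rist_fixes_level _ Hlen) as Hy. rewrite act_cons in Hy.
  now injection Hy.
Qed.

End Rist.

Lemma act_concat_fixed (L : list word) (v : list X) :
  (forall w, In w L -> act w v = v) -> act (concat L) v = v.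
Proof.
  induction L as [|w L IH]; intros Hfix; [reflexivity|].
  simpl. rewrite act_app, Hfix by now left. apply IH. intros w' Hw'. apply Hfix. now right.
Qed.

(* The trivial sections at the other vertices of the level are appended to the section at [u],
   so that the exponent sum of the representative is exactly [2^|u| |f|]. *)
Lemma rist_section (u : list X) (f : word) :
  u <> [] -> InRist u f ->
  exists s, (forall v, act f (u ++ v) = u ++ act s v) /\ (2 ^ Z.of_nat (S (length u)) | expsum s)%Z.
Proof.
  intros Hne Hrist.
  pose proof (level_vertices_nodup (length u)) as Hnodup.
  destruct (in_split _ _ (in_level_vertices u)) as [l1 [l2 Hsplit]].
  rewrite Hsplit in Hnodup. apply NoDup_remove_2 in Hnodup.
  exists (vertex_sec f u ++ concat (map (vertex_sec f) (l1 ++ l2))). split.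
  - intros v. rewrite rist_act_own by exact Hrist. f_equal.
    rewrite act_app, act_concat_fixed; [reflexivity|].
    intros w Hw. apply in_map_iff in Hw as [u' [<- Hu']].
    apply (rist_sec_off u); [exact Hrist| |congruence].
    apply (level_vertices_length (length u)). rewrite Hsplit.
    apply in_app_iff in Hu' as [|]; apply in_app_iff; [now left | right; now right].
  - assert (Hlevel := expsum_level_secs (length u) f).
    rewrite Hsplit, map_app, concat_app in Hlevel. cbn [map concat] in Hlevel.
    rewrite !expsum_app in Hlevel.
    destruct (rist_expsum_even u f Hrist Hne) as [m Hm].
    exists m. rewrite expsum_app, map_app, concat_app, expsum_app, pow2_succ. lia.
Qed.

Definition rist_factor (p : list X * word * bool) : word :=
  if snd p then winv (snd (fst p)) else snd (fst p).

Definition rist_factors (k : nat) (l : list (list X * word * bool)) : Prop :=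
  forall p, In p l -> length (fst (fst p)) = k /\ InRist (fst (fst p)) (snd (fst p)).

Lemma rist_factor_rist (p : list X * word * bool) :
  InRist (fst (fst p)) (snd (fst p)) -> InRist (fst (fst p)) (rist_factor p).
Proof. unfold rist_factor. destruct (snd p); [apply rist_winv | trivial]. Qed.

Lemma rist_level_section (k : nat) (l : list (list X * word * bool)) :
  (1 <= k)%nat -> rist_factors k l -> forall u, length u = k ->
  exists s, (forall v, act (concat (map rist_factor l)) (u ++ v) = u ++ act s v) /\
            (2 ^ Z.of_nat (S k) | expsum s)%Z.
Proof.
  intros Hk. induction l as [|p l IH]; intros Hl u Hu.
  - exists []. split; [reflexivity | now exists 0%Z].
  - destruct (Hl p (or_introl eq_refl)) as [Hlen Hrist]. apply rist_factor_rist in Hrist.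
    destruct (IH (fun q Hq => Hl q (or_intror Hq)) u Hu) as [s [Hact Hdiv]].
    cbn [map concat].
    destruct (vertex_eq_dec u (fst (fst p))) as [->|Hne].
    + assert (Hne : fst (fst p) <> []) by (intros E; rewrite E in Hlen; simpl in Hlen; lia).
      destruct (rist_section _ _ Hne Hrist) as [s0 [Hact0 Hdiv0]].
      exists (s0 ++ s). split.
      * intros v. now rewrite !act_app, Hact0, Hact.
      * rewrite Hlen in Hdiv0. rewrite expsum_app. now apply Z.divide_add_r.
    + exists s. split; [|exact Hdiv].
      intros v. rewrite act_app, (rist_off _ _ Hrist); [apply Hact | congruence | exact Hne].
Qed.

Lemma rist_level_lift (k : nat) (h : list X -> word) (L : list (list X)) :
  NoDup L -> (forall u, In u L -> length u = k /\ InH k (h u)) ->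
  exists l, rist_factors k l /\
    (forall u, In u L -> forall v, act (concat (map rist_factor l)) (u ++ v) = u ++ act (h u) v) /\
    (forall u, length u = k -> ~ In u L -> forall v, act (concat (map rist_factor l)) (u ++ v) = u ++ v).
Proof.
  induction 1 as [|a L Ha HL IH]; intros Hh.
  - exists []. split; [|split]; [intros ? [] | intros ? [] | reflexivity].
  - destruct (IH (fun u Hu => Hh u (or_intror Hu))) as [l [Hl [Hin Hout]]].
    destruct (Hh a (or_introl eq_refl)) as [Hlen [w [Hw Hdiv]]].
    destruct (rist_lift a w ltac:(now rewrite Hlen)) as [g [Hrist [Hact _]]].
    exists ((a, g, false) :: l). cbn [map concat rist_factor fst snd].
    split; [|split].
    + intros p [<- | Hp]; [easy | now apply Hl].
    + intros u [<- | Hu] v; rewrite act_app.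
      * now rewrite Hact, Hout, Hw.
      * rewrite (rist_off _ _ Hrist); [now apply Hin | now rewrite (proj1 (Hh u (or_intror Hu))) |].
        intros ->. contradiction.
    + intros u Hu Hnot v. rewrite act_app, (rist_off _ _ Hrist); [apply Hout | congruence |];
        [exact Hu | intros Hin'; apply Hnot; now right | intros ->; apply Hnot; now left].
Qed.

Lemma sect_of_act (w s : word) (u : list X) :
  (forall v, act w (u ++ v) = u ++ act s v) -> forall v, sect w u v = act s v.
Proof.
  intros H v. unfold sect. rewrite H, skipn_app, skipn_all, Nat.sub_diag. reflexivity.
Qed.

Theorem theorem5p5 :
  forall (k : nat), (1 <= k)%nat ->
  forall h : list X -> word,
    ((exists w, InRistLevel k w /\
        forall u, length u = k -> forall v, sect w u v = act (h u) v)
     <-> (forall u, length u = k -> InH k (h u)))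
    /\
    ((exists w, InRist (ones k) w /\
        forall u, length u = k -> forall v, sect w u v = act (h u) v)
     <-> (InH k (h (ones k)) /\
          forall u, length u = k -> u <> ones k -> equiv (h u) nil)).
Proof.
  intros k Hk h.
  assert (Hones : length (ones k) = k) by apply repeat_length.
  assert (Hones_ne : ones k <> []) by (intros E; rewrite E in Hones; simpl in Hones; lia).
  split; split.
  - intros [w [[l [Hl Heq]] Hsect]] u Hu.
    destruct (rist_level_section k l Hk Hl u Hu) as [s [Hact Hdiv]].
    exists s. split; [|exact Hdiv].
    intros v. rewrite <- Hsect, <- (sect_of_act _ _ _ Hact) by exact Hu.
    unfold sect. now rewrite Heq.
  - intros HH.
    destruct (rist_level_lift k h (level_vertices k) (level_vertices_nodup k)) as [l [Hl [Hin _]]].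
    { intros u Hu. pose proof (level_vertices_length _ _ Hu) as Hlen. split; [exact Hlen|]. now apply HH. }
    exists (concat (map rist_factor l)). split; [now exists l|].
    intros u Hu. apply sect_of_act, Hin. rewrite <- Hu. apply in_level_vertices.
  - intros [w [Hrist Hsect]]. split.
    + destruct (rist_section _ _ Hones_ne Hrist) as [s [Hact Hdiv]].
      exists s. rewrite Hones in Hdiv. split; [|exact Hdiv].
      intros v. now rewrite <- Hsect, (sect_of_act _ _ _ Hact).
    + intros u Hu Hne v. rewrite <- Hsect by exact Hu.
      apply sect_of_act. intros t. now apply (rist_off _ _ Hrist); [congruence|].
  - intros [[w0 [Hw0 Hdiv]] Htriv].
    destruct (rist_lift (ones k) w0 ltac:(now rewrite Hones)) as [g [Hrist [Hact _]]].
    exists g. split; [exact Hrist|]. intros u Hu. apply sect_of_act. intros v.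
    destruct (vertex_eq_dec u (ones k)) as [->|Hne].
    + now rewrite Hact, Hw0.
    + rewrite (rist_off _ _ Hrist), (Htriv u Hu Hne); [reflexivity | congruence | exact Hne].
Qed.
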